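(* Assume $\alpha_1\ge0$, $\alpha_2\ge0$, $\alpha_1+\alpha_2>0$, $\beta_1\ge0$, $\beta_2\ge0$, $\lambda>0$, and consider searching on a line with costs $\mathrm{cost}_1(x)=\alpha_1x+\beta_1$, $\mathrm{cost}_2(y)=\alpha_2y+\beta_2$. Write $u=(\alpha_1+\alpha_2)\lambda$, $a=\frac{3\beta_1+2\beta_2}{2u}$ and $b=\frac{\beta_1+\beta_2}{u}$. (i) If $a\le1$, the periodic strategy with distances $$x_i=\Big(\big((1-a)\,i+(1+b)\big)2^i-b\Big)\lambda$$ is optimal and has competitive ratio $5\alpha_1+4\alpha_2$. (ii) If $a\ge1$, let $$\Phi=1+\left(\frac{2\beta_1+\beta_2-u+\sqrt{(2\beta_1+\beta_2)^2-\beta_2^2+(\beta_2+u)^2}}{2u}\right)^{-1}.$$ Then the periodic strategy with distances $x_i=\big((1+b)\Phi^i-b\big)\lambda$ is optimal and has competitive ratio $$\frac{(\alpha_1+\alpha_2)x_1+(\beta_1+\beta_2)+(\alpha_1\lambda+\beta_1)}{\lambda}.$$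
   Context: Searching on a line with general costs. Fix $\lambda>0$. A search strategy is a sequence $\mathcal S(i)=(x_i,r_i)$, $i\ge 1$, with $x_i>0$ and $r_i\in\{\mathrm{left},\mathrm{right}\}$, such that $\sup\{x_i: r_i=\mathrm{left}\}=\sup\{x_i:r_i=\mathrm{right}\}=\infty$. At step $i$ the searcher, starting at the origin, walks distance $x_i$ along ray $r_i$ and, if the target has not been found, walks back to the origin. The target lies on one of the two rays at an unknown distance $D\ge\lambda$ from the origin ($\lambda$ is known to the searcher); it is found at the first step $j$ such that $r_j$ is the target's ray and $x_j\ge D$. Walking distance $x$ away from the origin costs $\mathrm{cost}_1(x)=\alpha_1x+\beta_1$ and walking distance $y$ back towards the origin costs $\mathrm{cost}_2(y)=\alpha_2y+\beta_2$, so the total cost when the target is found at step $j$ is $\sum_{i=1}^{j-1}\big(\mathrm{cost}_1(x_i)+\mathrm{cost}_2(x_i)\big)+\mathrm{cost}_1(D)$. The competitive ratio $CR(\mathcal S)$ is the supremum, over all target positions (either ray, any $D\ge\lambda$), of the total cost divided by $D$. A strategy is optimal if its competitive ratio is minimum among all search strategies. A periodic strategy with distances $x_i$ means $r_1\ne r_2$ and $r_{i+2}=r_i$ for all $i\ge1$. For a periodic strategy with increasing distances the competitive ratio is $\max\Big\{\frac{(\alpha_1+\alpha_2)x_1+\beta_1+\beta_2+\alpha_1\lambda+\beta_1}{\lambda},\ \sup_{n\ge1}\frac{\sum_{i=1}^{n+1}\big((\alpha_1+\alpha_2)x_i+\beta_1+\beta_2\big)+\alpha_1x_n+\beta_1}{x_n}\Big\}$.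 *)

From Stdlib Require Import Reals Lra.
Open Scope R_scope.

(* A search strategy: step i (i >= 1) walks distance sx i along ray sr i
   (true = right, false = left). Index 0 is unused. *)
Record strategy := mkStrategy { sx : nat -> R; sr : nat -> bool }.

Definition valid_strategy (S : strategy) : Prop :=
  (forall i, (1 <= i)%nat -> 0 < sx S i) /\
  (forall M, exists i, (1 <= i)%nat /\ sr S i = true /\ M < sx S i) /\
  (forall M, exists i, (1 <= i)%nat /\ sr S i = false /\ M < sx S i).

Fixpoint round_costs (a1 b1 a2 b2 : R) (x : nat -> R) (n : nat) : R :=
  match n with
  | O => 0
  | S m => round_costs a1 b1 a2 b2 x m + ((a1 * x (S m) + b1) + (a2 * x (S m) + b2))
  end.

Definition found_at (S : strategy) (side : bool) (D : R) (j : nat) : Prop :=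
  (1 <= j)%nat /\ sr S j = side /\ D <= sx S j /\
  (forall i, (1 <= i)%nat -> (i < j)%nat -> ~ (sr S i = side /\ D <= sx S i)).

Definition total_cost (a1 b1 a2 b2 : R) (S : strategy) (j : nat) (D : R) : R :=
  round_costs a1 b1 a2 b2 (sx S) (Nat.pred j) + (a1 * D + b1).

Definition ratios (a1 b1 a2 b2 lam : R) (S : strategy) (q : R) : Prop :=
  exists side D j, lam <= D /\ found_at S side D j /\
    q = total_cost a1 b1 a2 b2 S j D / D.

Definition has_CR (a1 b1 a2 b2 lam : R) (S : strategy) (c : R) : Prop :=
  is_lub (ratios a1 b1 a2 b2 lam S) c.

(* S is an optimal search strategy: its competitive ratio is minimum
   among all search strategies (strategies with infinite ratio impose nothing). *)
Definition optimal (a1 b1 a2 b2 lam : R) (S : strategy) : Prop :=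
  valid_strategy S /\
  exists c, has_CR a1 b1 a2 b2 lam S c /\
    forall S' c', valid_strategy S' ->
      is_upper_bound (ratios a1 b1 a2 b2 lam S') c' -> c <= c'.

Definition periodic (r : nat -> bool) : Prop :=
  r 1%nat <> r 2%nat /\ forall i, (1 <= i)%nat -> r (i + 2)%nat = r i.

From Stdlib Require Import Reals Lra Lia Psatz Arith Wf_nat Classical IndefiniteDescription.
Open Scope R_scope.

(* Upper bound: both strategies are equalizing, i.e. a target at distance D just beyond
   the turning point x_n of the previous sweep of its side is found at step n + 2 at cost
   (C - alpha1) x_n + alpha1 D <= C D, with equality for the target at distance lambda
   found at step 2.

   Lower bound: in an arbitrary strategy follow the sweeps, each one extending the explored
   part of the side opposite to the previous one. A target just beyond the k-th sweep is
   paid only after sweep k + 1, so after normalisation the extents v_k satisfy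
   sum_(i <= k+1) (v_i + b) + e <= c v_k, where c = (CR - alpha1) / (alpha1 + alpha2).
   The partial sums U_n then obey U_(n+2) <= c (U_(n+1) - U_n); the ratios U_(n+1) / U_n
   stay above 1 only if t^2 - c t + c <= 0 for some t in [1, U_1 / U_0]. This forces
   c >= 4, and when a >= 1 the bound U_1 / U_0 <= c (1 + b) / (e + c b) forces
   c >= (1 + b) Phi + e. *)

Lemma least_witness (P : nat -> Prop) :
  (exists n, P n) -> exists n, P n /\ forall m, P m -> (n <= m)%nat.
Proof.
  intro hex.
  destruct (dec_inh_nat_subset_has_unique_least_element P (fun n => classic (P n)) hex)
    as (n & least_n & _).
  exists n; exact least_n.
Qed.

Lemma le_of_forall_gt (a z q : R) : (forall D, z < D -> q <= a * D) -> q <= a * z.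
Proof.
  intro h. destruct (Rle_or_lt a 0) as [ha | ha].
  - specialize (h (z + 1) ltac:(lra)). nra.
  - apply Rle_plus_epsilon. intros eps heps.
    specialize (h (z + eps / a)).
    replace (a * (z + eps / a)) with (a * z + eps) in h by (field; lra).
    apply h. assert (0 < eps / a) by (apply Rdiv_lt_0_compat; lra). lra.
Qed.

Lemma div_le_iff (p q D : R) : 0 < D -> (p / D <= q <-> p <= q * D).
Proof.
  intro hD. replace p with (p / D * D) at 2 by (field; lra).
  split; intro h; [apply Rmult_le_compat_r | apply (Rmult_le_reg_r D)]; lra.
Qed.

Lemma cv_infty_le (u w : nat -> R) : cv_infty u -> (forall n, u n <= w n) -> cv_infty w.
Proof.
  intros hu hle M. destruct (hu M) as [N hN].
  exists N. intros n hn. specialize (hN n hn). specialize (hle n). lra.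
Qed.

Lemma cv_infty_affine_pow (q k m : R) : 1 < q -> 0 < k -> cv_infty (fun n => k * q ^ n + m).
Proof.
  intros hq hk M.
  destruct (Pow_x_infinity q ltac:(rewrite Rabs_pos_eq; lra) ((M - m) / k + 1)) as [N hN].
  exists N. intros n hn. specialize (hN n hn).
  rewrite Rabs_pos_eq in hN by (apply pow_le; lra).
  assert (hMk : M - m < k * ((M - m) / k + 1)) by (field_simplify; lra).
  nra.
Qed.

Fixpoint prefix_sum (f : nat -> R) (n : nat) : R :=
  match n with O => 0 | S m => prefix_sum f m + f m end.

Lemma prefix_sum_nonneg (f : nat -> R) n : (forall i, 0 <= f i) -> 0 <= prefix_sum f n.
Proof. intro hf. induction n as [|n IH]; simpl; [lra|]. specialize (hf n). lra. Qed.

Lemma prefix_sum_shift_le (f : nat -> R) N n :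
  (forall i, 0 <= f i) -> prefix_sum (fun i => f (N + i)%nat) n <= prefix_sum f (N + n).
Proof.
  intro hf. induction n as [|n IH]; simpl.
  - rewrite Nat.add_0_r. apply prefix_sum_nonneg, hf.
  - rewrite Nat.add_succ_r. simpl. lra.
Qed.

(* The inequalities satisfied by the normalised sweep extents [v k] of any strategy whose
   competitive ratio is [alpha1 + (alpha1 + alpha2) c], with [b = (beta1 + beta2) / u] and
   [e = beta1 / u]; the first one comes from the target at distance [lambda]. *)
Definition ratio_constraints (b e c : R) (v : nat -> R) : Prop :=
  (forall k, 0 < v k) /\ v 0%nat + b + e <= c /\
  forall k, prefix_sum (fun i => v i + b) (S (S k)) + e <= c * v k.

Lemma quadratic_small_at_ratio (U : nat -> R) (c d : R) :
  (forall n, 0 < U n) -> (forall n, U n < U (S n)) ->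
  (forall n, U (S (S n)) <= c * (U (S n) - U n)) -> 0 < d ->
  exists t, 1 < t <= U 1%nat / U 0%nat /\ t * t - c * t + c < d.
Proof.
  intros hpos hinc hrec hd. apply NNPP. intro hnone.
  assert (hq : forall t, 1 < t -> t <= U 1%nat / U 0%nat -> d <= t * t - c * t + c).
  { intros t h1 h2. apply Rnot_lt_le. intro hlt. apply hnone. exists t. auto. }
  set (rho := fun n => U (S n) / U n).
  assert (hrho1 : forall n, 1 < rho n).
  { intro n. unfold rho. specialize (hpos n). specialize (hinc n).
    apply (Rmult_lt_reg_r (U n)); [lra|]. field_simplify; lra. }
  (* [U (n+2) <= c (U (n+1) - U n)] reads [rho (n+1) <= c - c / rho n]. *)
  assert (hstep : forall n, rho (S n) <= rho n - (rho n * rho n - c * rho n + c) / rho n).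
  { intro n. unfold rho. pose proof (hpos n). pose proof (hpos (S n)). pose proof (hrec n).
    replace (U (S n) / U n - (U (S n) / U n * (U (S n) / U n) - c * (U (S n) / U n) + c)
             / (U (S n) / U n)) with (c * (U (S n) - U n) / U (S n)) by (field; lra).
    apply Rmult_le_compat_r; [left; apply Rinv_0_lt_compat|]; lra. }
  set (r0 := rho 0%nat).
  assert (hd0 : 0 < d / r0) by (apply Rdiv_lt_0_compat; [lra | apply (Rlt_trans _ 1); [lra | apply hrho1]]).
  assert (hdecay : forall n, rho n <= r0 - INR n * (d / r0)).
  { induction n as [|n IH]; [simpl; unfold r0; lra|].
    pose proof (hrho1 n) as h1.
    assert (hle : rho n <= r0) by (pose proof (pos_INR n); nra).
    assert (hdiv : d / r0 <= (rho n * rho n - c * rho n + c) / rho n).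
    { apply Rle_trans with (d / rho n).
      - apply Rmult_le_compat_l; [lra | apply Rinv_le_contravar; lra].
      - apply Rmult_le_compat_r; [left; apply Rinv_0_lt_compat; lra | apply hq; [lra | exact hle]]. }
    pose proof (hstep n). rewrite S_INR. lra. }
  destruct (INR_archimed (d / r0) r0 hd0) as [n hn].
  pose proof (hdecay n). pose proof (hrho1 n). lra.
Qed.

Section Cumulative.
Variables (b e c : R) (v : nat -> R).
Hypotheses (hb : 0 <= b) (he : 0 <= e) (hv : ratio_constraints b e c v).

Definition cumulative (n : nat) : R := e + c * b + prefix_sum (fun i => v i + b) n.

Lemma ratio_constraints_c_pos : 0 < c.
Proof. destruct hv as (hpos & h0 & _). specialize (hpos 0%nat). lra. Qed.

Lemma cumulative_increasing n : cumulative n < cumulative (S n).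
Proof. destruct hv as (hpos & _). unfold cumulative. simpl. specialize (hpos n). lra. Qed.

Lemma cumulative_recurrence n : cumulative (S (S n)) <= c * (cumulative (S n) - cumulative n).
Proof. destruct hv as (_ & _ & hk). unfold cumulative. specialize (hk n). simpl in *. nra. Qed.

Lemma cumulative_one : cumulative 1 <= c * (1 + b).
Proof. destruct hv as (_ & h0 & _). unfold cumulative. simpl. lra. Qed.

Lemma cumulative_succ_pos n : 0 < cumulative (S n).
Proof.
  pose proof ratio_constraints_c_pos as hc.
  induction n as [|n IH].
  - assert (0 <= cumulative 0) by (unfold cumulative; simpl; nra).
    pose proof (cumulative_increasing 0). lra.
  - pose proof (cumulative_increasing (S n)). lra.
Qed.

Lemma ratio_constraints_ge_4 : 4 <= c.
Proof.
  pose proof ratio_constraints_c_pos as hc.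
  apply Rnot_lt_le. intro hc4.
  destruct (quadratic_small_at_ratio (fun n => cumulative (S n)) c (c * (4 - c) / 4))
    as (t & _ & ht).
  - apply cumulative_succ_pos.
  - intro n. apply cumulative_increasing.
  - intro n. apply cumulative_recurrence.
  - apply Rdiv_lt_0_compat; nra.
  - assert (0 <= (t - c / 2) * (t - c / 2)) by apply Rle_0_sqr. lra.
Qed.

Lemma ratio_constraints_ge_root (Phi : R) :
  2 <= e + 2 * b -> b * Phi ^ 2 = (1 + b - e) * Phi + e -> (1 + b) * Phi + e <= c.
Proof.
  intros h2 hroot. pose proof ratio_constraints_ge_4 as hc4.
  set (cs := (1 + b) * Phi + e).
  apply Rnot_lt_le. intro hlt.
  set (w := e + c * b).
  assert (hw : 2 * (1 + b) <= w) by (unfold w; nra).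
  (* [g] is [w^2 / c] times the quadratic at [c (1 + b) / w]; as a function of [c] it is
     concave, vanishes at [cs] and is positive below. *)
  set (g := c * (1 + b) ^ 2 - c * (1 + b) * w + w ^ 2).
  assert (hg : 0 < g).
  { assert (hid : g * cs = (cs - c) * (b * c * cs + e * e)
                           - c * (1 + b) ^ 2 * (b * Phi ^ 2 - (1 + b - e) * Phi - e))
      by (unfold g, w, cs; ring).
    rewrite hroot in hid. replace ((1 + b - e) * Phi + e - (1 + b - e) * Phi - e) with 0 in hid by ring.
    assert (hccs : 0 < c * cs) by nra.
    assert (0 < b * c * cs + e * e).
    { rewrite Rmult_assoc. destruct (Rle_or_lt b 0) as [hb0 | hb0].
      - replace b with 0 in * by lra. nra.
      - pose proof (Rmult_lt_0_compat _ _ hb0 hccs). nra. }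
    assert (0 < g * cs) by nra. nra. }
  assert (hU0 : cumulative 0 = w) by (unfold cumulative, w; simpl; ring).
  set (R0 := c * (1 + b) / w).
  assert (hR0 : 2 * R0 <= c).
  { apply (Rmult_le_reg_r w); [lra|]. unfold R0.
    replace (2 * (c * (1 + b) / w) * w) with (c * (2 * (1 + b))) by (field; lra). nra. }
  assert (hqR0 : R0 * R0 - c * R0 + c = c * g / w ^ 2) by (unfold R0, g; field; lra).
  destruct (quadratic_small_at_ratio cumulative c (c * g / w ^ 2)) as (t & (ht1 & htU) & ht).
  - intros [|n]; [lra | apply cumulative_succ_pos].
  - apply cumulative_increasing.
  - apply cumulative_recurrence.
  - apply Rdiv_lt_0_compat; nra.
  - assert (htR0 : t <= R0).
    { apply Rle_trans with (1 := htU). unfold R0.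
      rewrite hU0.
      apply Rmult_le_compat_r; [left; apply Rinv_0_lt_compat; lra | apply cumulative_one]. }
    (* the quadratic decreases on [t <= c / 2] *)
    assert (t * t - c * t + c - (R0 * R0 - c * R0 + c) = (R0 - t) * (c - t - R0)) by ring.
    nra.
Qed.

End Cumulative.

Lemma periodic_side_after (r : nat -> bool) :
  periodic r -> forall s N, exists i, (N <= i)%nat /\ (1 <= i)%nat /\ r i = s.
Proof.
  intros [h12 hper] s N.
  assert (hparity : forall k, r (S (2 * k)) = r 1%nat /\ r (S (S (2 * k))) = r 2%nat).
  { induction k as [|k IH]; [split; reflexivity|].
    replace (S (S (2 * S k))) with (S (S (2 * k)) + 2)%nat by lia.
    replace (S (2 * S k)) with (S (2 * k) + 2)%nat by lia.
    rewrite !hper by lia. exact IH. }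
  destruct (Bool.bool_dec (r 1%nat) s) as [e | e].
  - exists (S (2 * N)). rewrite (proj1 (hparity N)). repeat split; [lia | lia | exact e].
  - exists (S (S (2 * N))). rewrite (proj2 (hparity N)). repeat split; [lia | lia |].
    destruct (r 1%nat), (r 2%nat), s; congruence.
Qed.

Lemma periodic_valid (x : nat -> R) (r : nat -> bool) :
  periodic r -> (forall n, 0 < x n) -> cv_infty x -> valid_strategy (mkStrategy x r).
Proof.
  intros hper hpos hinf.
  assert (hside : forall s M, exists i, (1 <= i)%nat /\ r i = s /\ M < x i).
  { intros s M. destruct (hinf M) as [N hN].
    destruct (periodic_side_after r hper s N) as (i & hNi & hi & hri).
    exists i. auto. }
  split; [intros i _; apply hpos | split; intro M; apply hside].
Qed.

(* A target at distance [D] beyond [x n] on the side of step [n] (or beyond [x 0 = lam] on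
   the side of step 2) is found at step [n + 2] at cost [(C - a1) * x n + a1 * D <= C * D]. *)
Definition equalizing (a1 b1 a2 b2 C : R) (x : nat -> R) : Prop :=
  forall n, round_costs a1 b1 a2 b2 x (S n) + b1 = (C - a1) * x n.

Lemma equalizing_of_recurrence (a1 b1 a2 b2 C : R) (x : nat -> R) :
  round_costs a1 b1 a2 b2 x 1 + b1 = (C - a1) * x 0%nat ->
  (forall n, (a1 * x (S (S n)) + b1) + (a2 * x (S (S n)) + b2) = (C - a1) * (x (S n) - x n)) ->
  equalizing a1 b1 a2 b2 C x.
Proof.
  intros h0 hrec n. induction n as [|n IH]; [exact h0|].
  simpl round_costs at 1. rewrite hrec, Rmult_minus_distr_l. simpl in IH. lra.
Qed.

Lemma periodic_equalizing_has_CR (a1 b1 a2 b2 lam C : R) (x : nat -> R) (r : nat -> bool) :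
  0 <= a1 -> 0 <= a2 -> 0 <= b1 -> 0 <= b2 -> 0 < lam -> periodic r ->
  x 0%nat = lam -> (forall n, lam <= x n) ->
  equalizing a1 b1 a2 b2 C x -> has_CR a1 b1 a2 b2 lam (mkStrategy x r) C.
Proof.
  intros ha1 ha2 hb1 hb2 hlam [h12 hper] hx0 hxlam heq.
  pose proof (heq 0%nat) as h0. rewrite hx0, Rmult_minus_distr_r in h0.
  assert (hfirst : 0 <= round_costs a1 b1 a2 b2 x 1).
  { simpl. pose proof (hxlam 1%nat). nra. }
  assert (hCa : 0 <= C - a1) by nra.
  split.
  - intros q (s & D & j & hD & (hj & hjs & hjD & hjmin) & ->). cbn [sx sr] in *.
    assert (hcost : round_costs a1 b1 a2 b2 x (Nat.pred j) + b1 <= (C - a1) * D).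
    { destruct j as [|[|n]]; [lia | |].
      - simpl. pose proof (Rmult_le_compat_l _ _ _ hCa hD). lra.
      - simpl Nat.pred. rewrite heq. apply Rmult_le_compat_l; [exact hCa|].
        destruct n as [|n]; [lra|].
        apply Rlt_le, Rnot_le_lt. intro hle. apply (hjmin (S n)); [lia | lia |].
        split; [|exact hle]. rewrite <- hjs. replace (S (S (S n))) with (S n + 2)%nat by lia.
        symmetry. apply hper. lia. }
    unfold total_cost. cbn [sx]. apply div_le_iff; [lra|]. nra.
  - intros M hM. apply hM. exists (r 2%nat), lam, 2%nat. split; [lra|]. split.
    + repeat split; simpl; [lia | apply hxlam |].
      intros i hi1 hi2 [hri _]. replace i with 1%nat in hri by lia. auto.
    + unfold total_cost. cbn [Nat.pred sx].
      replace (round_costs a1 b1 a2 b2 x 1 + (a1 * lam + b1)) with (C * lam) by lra.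
      field. lra.
Qed.

Section Explored.
Variables (r : nat -> bool) (x : nat -> R).

Fixpoint explored (s : bool) (n : nat) : R :=
  match n with
  | O => 0
  | S m => if Bool.eqb (r (S m)) s then Rmax (explored s m) (x (S m)) else explored s m
  end.

Lemma explored_nonneg s n : 0 <= explored s n.
Proof.
  induction n as [|n IH]; simpl; [lra|].
  destruct (Bool.eqb _ _); [apply Rle_trans with (explored s n); [lra | apply Rmax_l] | lra].
Qed.

Lemma explored_mono s p n : (p <= n)%nat -> explored s p <= explored s n.
Proof.
  induction 1 as [|n _ IH]; [lra|].
  apply Rle_trans with (explored s n); [exact IH|].
  simpl. destruct (Bool.eqb _ _); [apply Rmax_l | lra].
Qed.

Lemma explored_ge s i n : (1 <= i <= n)%nat -> r i = s -> x i <= explored s n.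
Proof.
  intros hi hs. apply Rle_trans with (explored s i); [|apply explored_mono; lia].
  destruct i as [|i]; [lia|]. simpl. rewrite hs, Bool.eqb_reflx. apply Rmax_r.
Qed.

Lemma explored_le s p n M :
  explored s p <= M -> (forall i, (p < i <= n)%nat -> r i = s -> x i <= M) ->
  explored s n <= M.
Proof.
  intros hp hi. induction n as [|n IH].
  - pose proof (explored_mono s 0 p ltac:(lia)). simpl in *. lra.
  - destruct (le_lt_dec (S n) p) as [hn | hn].
    + apply Rle_trans with (explored s p); [apply explored_mono|]; assumption.
    + assert (hM : explored s n <= M) by (apply IH; intros; apply hi; [lia | assumption]).
      simpl. destruct (Bool.eqb (r (S n)) s) eqn:E; [|exact hM].
      apply Rmax_lub; [exact hM|]. apply hi; [lia | apply Bool.eqb_prop, E].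
Qed.

Lemma explored_attained s p n :
  explored s p < explored s n -> exists w, (p < w <= n)%nat /\ r w = s /\ x w = explored s n.
Proof.
  induction n as [|n IH]; intro hlt.
  - pose proof (explored_mono s 0 p ltac:(lia)). simpl in *. lra.
  - destruct (le_lt_dec (S n) p) as [hn | hn].
    + pose proof (explored_mono s _ _ hn). lra.
    + simpl in hlt |- *. destruct (Bool.eqb (r (S n)) s) eqn:E.
      * unfold Rmax in hlt |- *. destruct (Rle_dec (explored s n) (x (S n))).
        -- exists (S n). repeat split; [lia | lia | apply Bool.eqb_prop, E].
        -- destruct (IH hlt) as (w & hw & hws & hxw). exists w. repeat split; auto; lia.
      * destruct (IH hlt) as (w & hw & hws & hxw). exists w. repeat split; auto; lia.
Qed.

End Explored.

Section RoundCosts.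
Variables (a1 b1 a2 b2 : R) (x : nat -> R).
Hypothesis round_cost_nonneg : forall i, (1 <= i)%nat -> 0 <= (a1 * x i + b1) + (a2 * x i + b2).

Lemma round_costs_mono p n :
  (p <= n)%nat -> round_costs a1 b1 a2 b2 x p <= round_costs a1 b1 a2 b2 x n.
Proof.
  induction 1 as [|n _ IH]; [lra|]. simpl.
  specialize (round_cost_nonneg (S n) ltac:(lia)). lra.
Qed.

Lemma round_cost_le_sub p w n : (p < w <= n)%nat ->
  (a1 * x w + b1) + (a2 * x w + b2)
  <= round_costs a1 b1 a2 b2 x n - round_costs a1 b1 a2 b2 x p.
Proof.
  intros hw. destruct w as [|w]; [lia|].
  pose proof (round_costs_mono (S w) n ltac:(lia)).
  pose proof (round_costs_mono p w ltac:(lia)).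
  simpl in *. lra.
Qed.

End RoundCosts.

Section LowerBound.
Variables (a1 b1 a2 b2 lam c : R) (St : strategy).
Hypotheses (ha1 : 0 <= a1) (ha2 : 0 <= a2) (hb1 : 0 <= b1) (hb2 : 0 <= b2) (hlam : 0 < lam).
Hypotheses (hSt : valid_strategy St) (hc : is_upper_bound (ratios a1 b1 a2 b2 lam St) c).

Local Notation x := (sx St).
Local Notation r := (sr St).
Local Notation K := (round_costs a1 b1 a2 b2 (sx St)).

Lemma round_cost_nonneg i : (1 <= i)%nat -> 0 <= (a1 * x i + b1) + (a2 * x i + b2).
Proof. intro hi. destruct hSt as (hpos & _). specialize (hpos i hi). nra. Qed.

Lemma found_at_exists s D : exists j, found_at St s D j.
Proof.
  destruct hSt as (_ & hT & hF).
  destruct (least_witness (fun j => (1 <= j)%nat /\ r j = s /\ D <= x j)) as (j & hj & hjmin).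
  - destruct s; [destruct (hT D) as (i & hi) | destruct (hF D) as (i & hi)];
      exists i; intuition lra.
  - exists j. destruct hj as (hj1 & hjs & hjD). repeat split; auto.
    intros i hi1 hij hi. specialize (hjmin i (conj hi1 hi)). lia.
Qed.

Lemma found_cost_le s D j :
  lam <= D -> found_at St s D j -> K (Nat.pred j) + b1 <= (c - a1) * D.
Proof.
  intros hD hj.
  assert (hq : total_cost a1 b1 a2 b2 St j D / D <= c) by (apply hc; exists s, D, j; auto).
  apply div_le_iff in hq; [|lra]. unfold total_cost in hq. lra.
Qed.

Definition extends_explored (tau j : nat) : Prop :=
  (tau < j)%nat /\ r j = negb (r tau) /\ explored r x (negb (r tau)) tau < x j.

Lemma first_extension_exists tau :
  exists j, extends_explored tau j /\ forall m, extends_explored tau m -> (j <= m)%nat.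
Proof.
  apply least_witness. destruct (found_at_exists (negb (r tau)) (explored r x (negb (r tau)) tau + 1))
    as (i & hi1 & his & hiD & _).
  exists i. repeat split; [| exact his | lra].
  apply Nat.nlt_ge. intro hle.
  pose proof (explored_ge r x _ i tau ltac:(lia) his). lra.
Qed.

Lemma cost_beyond_explored tau j D :
  (forall m, extends_explored tau m -> (j <= m)%nat) ->
  explored r x (negb (r tau)) tau < D -> lam <= D -> K (Nat.pred j) + b1 <= (c - a1) * D.
Proof.
  intros hjmin hD hlD.
  destruct (found_at_exists (negb (r tau)) D) as (f & hf).
  pose proof hf as (hf1 & hfs & hfD & _).
  assert (htf : (tau < f)%nat).
  { apply Nat.nle_gt. intro hle. pose proof (explored_ge r x _ f tau ltac:(lia) hfs). lra. }
  assert (hjf : (j <= f)%nat) by (apply hjmin; repeat split; auto; lra).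
  pose proof (round_costs_mono a1 b1 a2 b2 x round_cost_nonneg (Nat.pred j) (Nat.pred f) ltac:(lia)).
  pose proof (found_cost_le _ _ _ hlD hf). lra.
Qed.

Section Turns.
Variable next : nat -> nat.
Hypothesis next_first : forall tau,
  extends_explored tau (next tau) /\ forall m, extends_explored tau m -> (next tau <= m)%nat.

Definition turn (k : nat) : nat := Nat.iter k next 1%nat.

Definition sweep (k : nat) : R := explored r x (r (turn k)) (turn (S k)).

Lemma turn_lt k : (turn k < turn (S k))%nat.
Proof. apply (next_first (turn k)). Qed.

Lemma turn_ge k : (S k <= turn k)%nat.
Proof. induction k as [|k IH]; [simpl; lia | pose proof (turn_lt k); lia]. Qed.

Lemma turn_side k : r (turn (S k)) = negb (r (turn k)).
Proof. apply (next_first (turn k)). Qed.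

Lemma explored_before_turn k :
  explored r x (r (turn (S k))) (Nat.pred (turn (S k))) <= explored r x (r (turn (S k))) (turn k).
Proof.
  apply explored_le with (p := turn k); [lra|]. intros i hi hri.
  apply Rnot_lt_le. intro hlt. rewrite turn_side in hri, hlt.
  assert (hext : extends_explored (turn k) i) by (repeat split; auto; lia).
  pose proof (proj2 (next_first (turn k)) i hext). simpl in hi. lia.
Qed.

Lemma turn_sets_record k : explored r x (r (turn k)) (Nat.pred (turn k)) < x (turn k).
Proof.
  destruct k as [|k].
  - simpl. destruct hSt as (hpos & _). apply hpos. lia.
  - eapply Rle_lt_trans; [apply explored_before_turn|].
    rewrite turn_side. apply (next_first (turn k)).
Qed.

Lemma sweep_attained k : exists w, (turn k <= w < turn (S k))%nat /\ x w = sweep k.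
Proof.
  assert (hlt : explored r x (r (turn k)) (Nat.pred (turn k)) < sweep k).
  { eapply Rlt_le_trans; [apply turn_sets_record|].
    apply explored_ge; [pose proof (turn_ge k); pose proof (turn_lt k); lia | reflexivity]. }
  destruct (explored_attained _ _ _ _ _ hlt) as (w & hw & hws & hxw).
  exists w. split; [|exact hxw]. split; [lia|].
  apply Nat.le_neq; split; [lia|]. intros ->. rewrite turn_side in hws.
  destruct (r (turn k)); discriminate.
Qed.

Lemma sweep_cost_le k :
  (a1 + a2) * sweep k + (b1 + b2) <= K (Nat.pred (turn (S k))) - K (Nat.pred (turn k)).
Proof.
  destruct (sweep_attained k) as (w & hw & <-).
  pose proof (turn_ge k).
  pose proof (round_cost_le_sub a1 b1 a2 b2 x round_cost_nonneg
                (Nat.pred (turn k)) w (Nat.pred (turn (S k))) ltac:(lia)).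
  lra.
Qed.

Lemma sweeps_cost_le k :
  prefix_sum (fun i => (a1 + a2) * sweep i + (b1 + b2)) (S k) <= K (Nat.pred (turn (S k))).
Proof.
  induction k as [|k IH]; simpl prefix_sum.
  - pose proof (sweep_cost_le 0). simpl in *. lra.
  - pose proof (sweep_cost_le (S k)). simpl prefix_sum in IH. lra.
Qed.

Lemma first_sweep_bound :
  (a1 + a2) * sweep 0 + (b1 + b2) + b1 <= (c - a1) * lam.
Proof.
  assert (h0 : explored r x (negb (r 1%nat)) 1 = 0) by (simpl; destruct (r 1%nat); reflexivity).
  pose proof (cost_beyond_explored 1 (next 1) lam (proj2 (next_first 1)) ltac:(lra) ltac:(lra)).
  pose proof (sweeps_cost_le 0). simpl in *. lra.
Qed.

(* A target just beyond [sweep k] on its side is not found before turn [k + 2]. *)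
Lemma sweeps_bound k D : sweep k < D -> lam <= D ->
  prefix_sum (fun i => (a1 + a2) * sweep i + (b1 + b2)) (S (S k)) + b1 <= (c - a1) * D.
Proof.
  intros hD hlD.
  pose proof (proj2 (next_first (turn (S k)))) as hmin.
  assert (hbeyond : explored r x (negb (r (turn (S k)))) (turn (S k)) < D)
    by (rewrite turn_side, Bool.negb_involutive; exact hD).
  pose proof (cost_beyond_explored _ _ D hmin hbeyond hlD).
  pose proof (sweeps_cost_le (S k)). simpl turn in *. lra.
Qed.

Lemma sweep_eventually_ge : exists N, forall k, (N <= k)%nat -> lam <= sweep k.
Proof.
  destruct hSt as (_ & hT & hF).
  destruct (hT lam) as (i1 & hi1 & hr1 & hx1). destruct (hF lam) as (i2 & hi2 & hr2 & hx2).
  exists (i1 + i2)%nat. intros k hk. pose proof (turn_ge (S k)). unfold sweep.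
  destruct (r (turn k)); [apply Rle_trans with (x i1) | apply Rle_trans with (x i2)];
    try lra; apply explored_ge; auto; lia.
Qed.

(* Dropping the initial sweeps shorter than [lam] only removes cost. *)
Lemma sweeps_from_lam : exists Z : nat -> R, (forall k, lam <= Z k) /\
  (a1 + a2) * Z 0%nat + (b1 + b2) + b1 <= (c - a1) * lam /\
  forall k, prefix_sum (fun i => (a1 + a2) * Z i + (b1 + b2)) (S (S k)) + b1 <= (c - a1) * Z k.
Proof.
  destruct (least_witness _ sweep_eventually_ge) as (N & hN & hNmin).
  assert (hterm : forall i, 0 <= (a1 + a2) * sweep i + (b1 + b2)).
  { intro i. pose proof (explored_nonneg r x (r (turn i)) (turn (S i))). unfold sweep. nra. }
  exists (fun k => sweep (N + k)%nat). split; [intro k; apply hN; lia|]. split.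
  - destruct N as [|m]; [exact first_sweep_bound|].
    assert (hm : sweep m < lam).
    { apply Rnot_le_lt. intro hle. enough (S m <= m)%nat by lia.
      apply hNmin. intros k hk. destruct (Nat.eq_dec k m) as [-> | hkm]; [exact hle | apply hN; lia]. }
    pose proof (sweeps_bound m lam hm ltac:(lra)). simpl prefix_sum in *.
    pose proof (prefix_sum_nonneg _ m hterm). pose proof (hterm m). rewrite Nat.add_0_r. lra.
  - intro k. apply le_of_forall_gt. intros D hD.
    pose proof (hN (N + k)%nat ltac:(lia)).
    pose proof (sweeps_bound (N + k) D hD ltac:(lra)).
    pose proof (prefix_sum_shift_le _ N (S (S k)) hterm).
    replace (N + S (S k))%nat with (S (S (N + k))) in * by lia. lra.
Qed.

End Turns.

Lemma ratio_constraints_of_upper_bound :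
  0 < a1 + a2 ->
  exists v, ratio_constraints ((b1 + b2) / ((a1 + a2) * lam)) (b1 / ((a1 + a2) * lam))
                              ((c - a1) / (a1 + a2)) v.
Proof.
  intro ha.
  destruct (functional_choice _ first_extension_exists) as [next next_first].
  destruct (sweeps_from_lam next next_first) as (Z & hZ & h0 & hk).
  set (u := (a1 + a2) * lam). assert (hu : 0 < u) by (unfold u; nra).
  assert (hsum : forall n, prefix_sum (fun i => Z i / lam + (b1 + b2) / u) n
                           = prefix_sum (fun i => (a1 + a2) * Z i + (b1 + b2)) n / u).
  { induction n as [|n IH]; simpl; [field; lra | rewrite IH; unfold u; field; lra]. }
  exists (fun k => Z k / lam). split; [|split].
  - intro k. apply Rdiv_lt_0_compat; [pose proof (hZ k) |]; lra.
  - apply (Rmult_le_reg_r u); [exact hu|].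
    replace ((Z 0%nat / lam + (b1 + b2) / u + b1 / u) * u) with ((a1 + a2) * Z 0%nat + (b1 + b2) + b1)
      by (unfold u; field; lra).
    replace ((c - a1) / (a1 + a2) * u) with ((c - a1) * lam) by (unfold u; field; lra).
    exact h0.
  - intro k. rewrite hsum. apply (Rmult_le_reg_r u); [exact hu|].
    replace ((prefix_sum (fun i => (a1 + a2) * Z i + (b1 + b2)) (S (S k)) / u + b1 / u) * u)
      with (prefix_sum (fun i => (a1 + a2) * Z i + (b1 + b2)) (S (S k)) + b1) by (field; lra).
    replace ((c - a1) / (a1 + a2) * (Z k / lam) * u) with ((c - a1) * Z k) by (unfold u; field; lra).
    apply hk.
Qed.

End LowerBound.

Lemma equalizing_strategy_optimal (a1 b1 a2 b2 lam m : R) (x : nat -> R) (r : nat -> bool) :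
  0 <= a1 -> 0 <= a2 -> 0 < a1 + a2 -> 0 <= b1 -> 0 <= b2 -> 0 < lam -> periodic r ->
  x 0%nat = lam -> (forall n, lam <= x n) -> cv_infty x ->
  equalizing a1 b1 a2 b2 (a1 + (a1 + a2) * m) x ->
  (forall v c, ratio_constraints ((b1 + b2) / ((a1 + a2) * lam)) (b1 / ((a1 + a2) * lam)) c v ->
     m <= c) ->
  optimal a1 b1 a2 b2 lam (mkStrategy x r) /\
  has_CR a1 b1 a2 b2 lam (mkStrategy x r) (a1 + (a1 + a2) * m).
Proof.
  intros ha1 ha2 ha hb1 hb2 hlam hper hx0 hxlam hinf heq hlow.
  assert (hCR : has_CR a1 b1 a2 b2 lam (mkStrategy x r) (a1 + (a1 + a2) * m))
    by (apply periodic_equalizing_has_CR; assumption).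
  split; [|exact hCR].
  split; [apply periodic_valid; [exact hper | intro n; pose proof (hxlam n); lra | exact hinf]|].
  exists (a1 + (a1 + a2) * m). split; [exact hCR|]. intros S' c' hS' hub.
  destruct (ratio_constraints_of_upper_bound a1 b1 a2 b2 lam c' S' ha1 ha2 hb1 hb2 hlam hS' hub ha)
    as [v hv].
  pose proof (Rmult_le_compat_l _ _ _ (Rlt_le _ _ ha) (hlow v _ hv)).
  replace ((a1 + a2) * ((c' - a1) / (a1 + a2))) with (c' - a1) in * by (field; lra).
  lra.
Qed.

Lemma geometric_profile (q b lam : R) (x : nat -> R) :
  1 < q -> 0 <= b -> 0 < lam -> (forall n, ((1 + b) * q ^ n - b) * lam <= x n) ->
  (forall n, lam <= x n) /\ cv_infty x.
Proof.
  intros hq hb hlam hx. split.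
  - intro n. pose proof (pow_R1_Rle q n ltac:(lra)). pose proof (hx n).
    assert (1 <= (1 + b) * q ^ n - b) by nra. nra.
  - apply cv_infty_le with (fun n => (1 + b) * lam * q ^ n + - (b * lam)).
    + apply cv_infty_affine_pow; nra.
    + intro n. pose proof (hx n). lra.
Qed.

Section Doubling.
Variables (a1 b1 a2 b2 lam a b : R) (x : nat -> R).
Hypotheses (hb : 0 <= b) (hlam : 0 < lam).
Hypothesis hx : forall i, x i = (((1 - a) * INR i + (1 + b)) * 2 ^ i - b) * lam.

Lemma doubling_profile : a <= 1 -> (forall n, lam <= x n) /\ cv_infty x.
Proof.
  intro ha. apply (geometric_profile 2 b lam); [lra | exact hb | exact hlam |].
  intro n. rewrite hx. apply Rmult_le_compat_r; [lra|].
  assert (0 <= (1 - a) * INR n * 2 ^ n).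
  { apply Rmult_le_pos; [apply Rmult_le_pos; [lra | apply pos_INR] | apply pow_le; lra]. }
  lra.
Qed.

Lemma doubling_equalizing :
  a * (2 * ((a1 + a2) * lam)) = 3 * b1 + 2 * b2 -> b * ((a1 + a2) * lam) = b1 + b2 ->
  equalizing a1 b1 a2 b2 (a1 + (a1 + a2) * 4) x.
Proof.
  intros ha hb_u. apply equalizing_of_recurrence.
  - simpl. rewrite !hx. simpl. nra.
  - intro n. rewrite !hx, !S_INR. simpl. nra.
Qed.

End Doubling.

Lemma geometric_equalizing (a1 b1 a2 b2 lam Phi b e : R) (x : nat -> R) :
  b * ((a1 + a2) * lam) = b1 + b2 -> e * ((a1 + a2) * lam) = b1 ->
  b * Phi ^ 2 = (1 + b - e) * Phi + e ->
  (forall i, x i = ((1 + b) * Phi ^ i - b) * lam) ->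
  equalizing a1 b1 a2 b2 (a1 + (a1 + a2) * ((1 + b) * Phi + e)) x.
Proof.
  intros hb he hroot hx. set (u := (a1 + a2) * lam) in *.
  apply equalizing_of_recurrence.
  - simpl. rewrite !hx. simpl. apply Rminus_diag_uniq.
    transitivity ((b1 + b2 - b * u) + (b1 - e * u)); [unfold u; ring | rewrite hb, he; ring].
  - intro n. rewrite !hx. apply Rminus_diag_uniq.
    transitivity (u * (1 + b) * Phi ^ n * ((1 + b - e) * Phi + e - b * Phi ^ 2)
                  + (b1 + b2 - b * u)); [unfold u; simpl; ring | rewrite hroot, hb; ring].
Qed.

Lemma Phi_root (b1 b2 u b e Phi : R) :
  0 <= b1 -> 0 <= b2 -> 0 < b1 + b2 -> 0 < u -> b * u = b1 + b2 -> e * u = b1 ->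
  Phi = 1 + / ((2 * b1 + b2 - u + sqrt ((2 * b1 + b2) ^ 2 - b2 ^ 2 + (b2 + u) ^ 2)) / (2 * u)) ->
  1 < Phi /\ b * Phi ^ 2 = (1 + b - e) * Phi + e.
Proof.
  intros hb1 hb2 hB hu hb he ->.
  set (rad := (2 * b1 + b2) ^ 2 - b2 ^ 2 + (b2 + u) ^ 2).
  assert (hsq : sqrt rad * sqrt rad = rad) by (apply sqrt_sqrt; unfold rad; nra).
  assert (hsq_ge : b2 + u <= sqrt rad).
  { rewrite <- (sqrt_pow2 (b2 + u)) by lra. apply sqrt_le_1_alt. unfold rad. nra. }
  set (T := (2 * b1 + b2 - u + sqrt rad) / (2 * u)).
  assert (hT : 0 < T) by (unfold T; apply Rdiv_lt_0_compat; lra).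
  (* [T = 1 / (Phi - 1)] is the positive root of [u T^2 + (u - 2 b1 - b2) T - (b1 + b2)]. *)
  assert (hTroot : u * T ^ 2 + (u - 2 * b1 - b2) * T - (b1 + b2) = 0).
  { assert (hsqT : sqrt rad = 2 * u * T - (2 * b1 + b2 - u)) by (unfold T; field; lra).
    rewrite hsqT in hsq. unfold rad in hsq. nra. }
  split.
  - pose proof (Rinv_0_lt_compat T hT). lra.
  - apply (Rmult_eq_reg_r (u * T ^ 2)); [| apply Rgt_not_eq; nra].
    apply Rminus_diag_uniq.
    transitivity (- (u * T ^ 2 + (u - 2 * b1 - b2) * T - (b1 + b2))
                  + (b * u - (b1 + b2)) * (T + 1) + (e * u - b1) * T);
      [field; lra | rewrite hb, he, hTroot; ring].
Qed.

Theorem theorem5 (a1 a2 b1 b2 lam : R)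
  (ha1 : 0 <= a1) (ha2 : 0 <= a2) (ha : 0 < a1 + a2)
  (hb1 : 0 <= b1) (hb2 : 0 <= b2) (hlam : 0 < lam) :
  let u := (a1 + a2) * lam in
  let a := (3 * b1 + 2 * b2) / (2 * u) in
  let b := (b1 + b2) / u in
  (a <= 1 ->
    forall r : nat -> bool, periodic r ->
      let S := mkStrategy
                 (fun i => (((1 - a) * INR i + (1 + b)) * 2 ^ i - b) * lam) r in
      optimal a1 b1 a2 b2 lam S /\ has_CR a1 b1 a2 b2 lam S (5 * a1 + 4 * a2)) /\
  (1 <= a ->
    let Phi := 1 + / ((2 * b1 + b2 - u
                       + sqrt ((2 * b1 + b2) ^ 2 - b2 ^ 2 + (b2 + u) ^ 2)) / (2 * u)) in
    forall r : nat -> bool, periodic r ->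
      let S := mkStrategy (fun i => ((1 + b) * Phi ^ i - b) * lam) r in
      optimal a1 b1 a2 b2 lam S /\
      has_CR a1 b1 a2 b2 lam S
        (((a1 + a2) * sx S 1%nat + (b1 + b2) + (a1 * lam + b1)) / lam)).
Proof.
  intros u a b.
  assert (hu : 0 < u) by (unfold u; nra).
  assert (hau : a * (2 * u) = 3 * b1 + 2 * b2) by (unfold a; field; lra).
  assert (hbu : b * u = b1 + b2) by (unfold b; field; lra).
  assert (heu : b1 / u * u = b1) by (field; lra).
  assert (hb : 0 <= b) by (unfold b; apply Rle_mult_inv_pos; lra).
  assert (he : 0 <= b1 / u) by (apply Rle_mult_inv_pos; lra).
  split.
  - intros ha_le r hper S.
    replace (5 * a1 + 4 * a2) with (a1 + (a1 + a2) * 4) by ring.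
    destruct (doubling_profile lam a b _ hb hlam (fun i => eq_refl) ha_le) as [hx_lam hx_inf].
    apply equalizing_strategy_optimal; try assumption.
    + simpl. ring.
    + exact (doubling_equalizing a1 b1 a2 b2 lam a b _ (fun i => eq_refl) hau hbu).
    + intros v c hv. exact (ratio_constraints_ge_4 _ _ _ _ hb he hv).
  - intros ha_ge Phi r hper S.
    assert (hB : 0 < b1 + b2) by nra.
    destruct (Phi_root b1 b2 u b (b1 / u) Phi hb1 hb2 hB hu hbu heu eq_refl) as [hPhi hroot].
    destruct (geometric_profile Phi b lam (fun i => ((1 + b) * Phi ^ i - b) * lam))
      as [hx_lam hx_inf]; [lra | exact hb | exact hlam | intro n; lra |].
    replace (((a1 + a2) * sx S 1%nat + (b1 + b2) + (a1 * lam + b1)) / lam)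
      with (a1 + (a1 + a2) * ((1 + b) * Phi + b1 / u)) by (unfold S, b, u; cbn [sx]; field; lra).
    apply equalizing_strategy_optimal; try assumption.
    + simpl. ring.
    + exact (geometric_equalizing a1 b1 a2 b2 lam Phi b (b1 / u) _ hbu heu hroot (fun i => eq_refl)).
    + intros v c hv. apply (ratio_constraints_ge_root _ _ _ _ hb he hv); [|exact hroot].
      replace (b1 / u + 2 * b) with (2 * a) by (unfold a, b; field; lra). lra.
Qed.
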